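(* Let $p$ be a prime, $q=p$ (i.e. $n=1$), $r=1$, and let $d$ be a natural number with $(d,p)=1$. Let $f$ be chosen uniformly at random from $\mathcal{G}_d$ and let $N(f)=(\#C_f(\mathbb{F}_{p})-1)/p$. As $p$ and $d$ both tend to infinity, $N(f)$ converges in distribution to the Poisson distribution with mean $1$, i.e. $\mathbb{P}(N=m)=e^{-1}/m!$.
   Context: $\mathcal{G}_d$ is the set of monic polynomials of degree $d$ in $\mathbb{F}_q[x]$. For $f\in\mathbb{F}_q[x]$ of degree prime to $p$, $C_f$ is the normalisation of the projective closure of the affine curve $y^p-y=f(x)$ over $\mathbb{F}_q$; its number of $\mathbb{F}_{q^r}$-rational points is congruent to $1$ modulo $p$. *)

From HB Require Import structures.
From mathcomp Require Import all_boot all_order all_algebra.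
From mathcomp Require Import reals sequences.
Set Implicit Arguments. Unset Strict Implicit. Unset Printing Implicit Defensive.
Import Order.TTheory GRing.Theory Num.Theory.
Local Open Scope ring_scope.

(* The monic polynomial of degree d over F_p with lower coefficients c:
   x^d + sum_{i<d} c_i x^i.  c ranges bijectively over G_d. *)
Definition monic_of (p d : nat) (c : {ffun 'I_d -> 'F_p}) : {poly 'F_p} :=
  'X^d + \sum_(i < d) (c i)%:P * 'X^i.

Definition AS_affine_points (p : nat) (f : {poly 'F_p}) : nat :=
  #|[set xy : 'F_p * 'F_p | xy.2 ^+ p - xy.2 == f.[xy.1]]|.

(* #C_f(F_p): the smooth model has exactly one point above x = infinity
   (deg f prime to p, total ramification), and it is F_p-rational. *)
Definition AS_points (p : nat) (f : {poly 'F_p}) : nat :=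
  (AS_affine_points f).+1.

Definition Nf (p : nat) (f : {poly 'F_p}) : nat :=
  ((AS_points f - 1) %/ p)%N.

Definition prob_N (R : realType) (p d m : nat) : R :=
  (#|[set c : {ffun 'I_d -> 'F_p} | Nf (monic_of c) == m]|)%:R /
  (#|[set: {ffun 'I_d -> 'F_p}]|)%:R.

From mathcomp Require Import all_boot all_order all_algebra finfield.
From mathcomp Require Import reals sequences normedtype.
From mathcomp Require Import ring lra zify.
Set Implicit Arguments. Unset Strict Implicit. Unset Printing Implicit Defensive.
Import Order.TTheory GRing.Theory Num.Theory.
Local Open Scope ring_scope.

(* Since y^p = y on F_p, the affine points of y^p - y = f(x) are the pairs (x, y) with
   f(x) = 0, so N(f) is the number of roots of f in F_p.  A set T of k <= d points lies
   in the roots of exactly p^(d-k) polynomials of G_d (evaluation at T is a surjective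
   linear map on the coefficients), and none if k > d.  Inclusion-exclusion then gives
     P(N = m) = 1/m! * sum_(j <= min(p,d) - m) (-1)^j/j! * p(p-1)...(p-m-j+1)/p^(m+j).
   Each falling-factorial ratio is 1 - O((m+j)^2/p), and the tail of the series of
   e^(-1) after N terms is below 1/N, so the sum tends to e^(-1)/m!. *)

Definition root_set (F : finFieldType) (f : {poly F}) : {set F} := [set x | root f x].

Lemma card_root_set_lt_size (F : finFieldType) (f : {poly F}) :
  f != 0 -> (#|root_set f| < size f)%N.
Proof.
move=> f_neq0; rewrite cardE; apply: max_poly_roots; rewrite ?enum_uniq //.
by apply/allP => x; rewrite mem_enum inE.
Qed.

Lemma Fp_expp (p : nat) (x : 'F_p) : prime p -> x ^+ p = x.
Proof. by move=> p_pr; rewrite -{2}(expf_card x) card_Fp. Qed.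

Lemma Nf_root_set (p : nat) (f : {poly 'F_p}) : prime p -> Nf f = #|root_set f|.
Proof.
move=> p_pr; rewrite /Nf /AS_points /AS_affine_points subSS subn0.
have -> : [set xy : 'F_p * 'F_p | xy.2 ^+ p - xy.2 == f.[xy.1]] = setX (root_set f) setT.
  by apply/setP => -[x y]; rewrite !inE /= Fp_expp // subrr andbT eq_sym.
by rewrite cardsX cardsT card_Fp // mulnK // prime_gt0.
Qed.

Lemma card_fiber_additive (V W : finZmodType) (L : V -> W) (w : W) :
  {morph L : x y / x - y} -> (forall w, exists x, L x = w) ->
  (#|[set x | L x == w]| * #|W| = #|V|)%N.
Proof.
move=> LB L_onto.
have L0 : L 0 = 0 by rewrite -(subrr 0) LB subrr.
have LN y : L (- y) = - L y by rewrite -sub0r LB L0 sub0r.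
have LD : {morph L : x y / x + y} by move=> x y; rewrite -[y]opprK LB opprK LN opprK.
have card_fiber w' : #|[set x | L x == w']| = #|[set x | L x == w]|.
  have [x' Lx'] := L_onto w'; have [x Lx] := L_onto w.
  rewrite -(card_imset _ (addIr (x - x'))); apply: eq_card => y; rewrite [RHS]inE.
  apply/imsetP/eqP => [[z] | Ly].
    by rewrite inE => /eqP Lz ->; rewrite LD LB Lz Lx' Lx addrC subrK.
  by exists (y - (x - x')); rewrite ?subrK // inE !LB Ly Lx' Lx opprB addrC subrK.
rewrite -[RHS]sum1_card (partition_big L predT) //= mulnC -sum_nat_const.
apply: eq_bigr => w' _; rewrite -(card_fiber w') -sum1_card.
by apply: eq_bigl => y; rewrite inE.
Qed.

Section NodeEvaluation.
Variable F : finFieldType.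

Definition eval_nodes (d k : nat) (t : 'I_k -> F) (v : 'rV[F]_d) : 'rV[F]_k :=
  \row_j (rVpoly v).[t j].

Lemma eval_nodesB d k (t : 'I_k -> F) : {morph @eval_nodes d k t : u v / u - v}.
Proof. by move=> u v; apply/rowP => j; rewrite !mxE raddfB hornerD hornerN. Qed.

Lemma eval_nodes_inj k (t : 'I_k -> F) : injective t -> injective (@eval_nodes k k t).
Proof.
move=> t_inj u v e; apply/eqP; rewrite -subr_eq0 -[u - v]rVpolyK; apply/eqP.
suff -> : rVpoly (u - v) = 0 by rewrite linear0.
apply/eqP; apply: contraT => nz.
have nodes : t @: setT \subset root_set (rVpoly (u - v)).
  apply/subsetP => _ /imsetP[j _ ->]; have := congr1 (fun r : 'rV_k => r 0 j) e.
  by rewrite inE /root !mxE raddfB hornerD hornerN => ->; rewrite subrr.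
have := leq_ltn_trans (subset_leq_card nodes) (card_root_set_lt_size nz).
by rewrite card_imset // cardsT card_ord ltnNge size_poly.
Qed.

Lemma eval_nodes_surj d k (t : 'I_k -> F) : injective t -> (k <= d)%N ->
  forall w, exists v, @eval_nodes d k t v = w.
Proof.
move=> t_inj kd w.
have /codomP[u ->] := inj_card_onto (eval_nodes_inj t_inj) (leqnn _) w.
exists (poly_rV (rVpoly u)); apply/rowP => j; rewrite !mxE poly_rV_K //.
exact: leq_trans (size_poly _ _) kd.
Qed.

Lemma card_vanishing_monic d (T : {set F}) :
  #|[set v : 'rV[F]_d | T \subset root_set ('X^d + rVpoly v)]| =
  if (#|T| <= d)%N then (#|F| ^ (d - #|T|))%N else 0%N.
Proof.
have size_monic (v : 'rV[F]_d) : size ('X^d + rVpoly v) = d.+1.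
  by rewrite size_polyDl size_polyXn // ltnS size_poly.
case: leqP => [Td | dT]; last first.
  apply/eqP; rewrite cards_eq0; apply/eqP/setP => v; rewrite !inE.
  apply/negbTE/negP => /subset_leq_card TZ.
  have nz : 'X^d + rVpoly v != 0 by rewrite -size_poly_eq0 size_monic.
  have := leq_ltn_trans TZ (card_root_set_lt_size nz).
  by rewrite size_monic ltnS leqNgt dT.
pose t (j : 'I_#|T|) : F := enum_val j.
pose w : 'rV[F]_#|T| := \row_j (- t j ^+ d).
have -> : [set v : 'rV[F]_d | T \subset root_set ('X^d + rVpoly v)] =
          [set v | eval_nodes t v == w].
  apply/setP => v; rewrite !inE; apply/subsetP/eqP => [vanish | e x xT].
    apply/rowP => j; rewrite !mxE; apply/eqP; rewrite -addr_eq0 addrC.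
    by have := vanish _ (enum_valP j); rewrite !inE /root hornerD hornerXn.
  have := congr1 (fun u : 'rV_#|T| => u 0 (enum_rank_in xT x)) e.
  by rewrite !mxE /t enum_rankK_in // inE /root hornerD hornerXn => ->; rewrite addrN.
have := card_fiber_additive w (@eval_nodesB d _ t) (eval_nodes_surj (@enum_val_inj _ _) Td).
rewrite !card_mx !mul1n => fiber_card.
have F_gt0 : (0 < #|F|)%N by apply/card_gt0P; exists 0.
apply/eqP; rewrite -(@eqn_pmul2r (#|F| ^ #|T|)) ?expn_gt0 ?F_gt0 //.
by rewrite -expnD subnK // fiber_card.
Qed.

End NodeEvaluation.

Lemma card_ffun_row (T : finType) d (P : pred 'rV[T]_d) :
  #|[set c : {ffun 'I_d -> T} | P (\row_i c i)]| = #|[set v | P v]|.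
Proof.
have row_inj : injective (fun c : {ffun 'I_d -> T} => \row_i c i).
  by move=> c c' e; apply/ffunP => i; have := congr1 (fun v : 'rV_d => v 0 i) e; rewrite !mxE.
rewrite -(card_imset _ row_inj); apply: eq_card => v; rewrite inE.
apply/imsetP/idP => [[c] | Pv]; first by rewrite inE => Pc ->.
have rowK : \row_i [ffun i => v 0 i] i = v by apply/rowP => i; rewrite mxE ffunE.
by exists [ffun i => v 0 i]; rewrite ?inE rowK.
Qed.

Lemma monic_ofE (p d : nat) (c : {ffun 'I_d -> 'F_p}) :
  monic_of c = 'X^d + rVpoly (\row_i c i).
Proof.
rewrite /monic_of (row_sum_delta (\row_i c i)) linear_sum; congr (_ + _).
by apply: eq_bigr => i _; rewrite linearZ /= rVpoly_delta mxE mul_polyC.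
Qed.

Lemma card_monic_of_vanishing (p d : nat) (T : {set 'F_p}) : prime p ->
  #|[set c : {ffun 'I_d -> 'F_p} | T \subset root_set (monic_of c)]| =
  if (#|T| <= d)%N then (p ^ (d - #|T|))%N else 0%N.
Proof.
move=> p_pr; rewrite -[X in (X ^ _)%N](card_Fp p_pr) -card_vanishing_monic.
rewrite -(card_ffun_row (fun v => T \subset root_set ('X^d + rVpoly v))).
by apply: eq_card => c; rewrite !inE monic_ofE.
Qed.

Lemma sum_subsets_card (R : nzSemiRingType) (T : finType) (B : {set T}) (f : nat -> R) :
  \sum_(A : {set T} | A \subset B) f #|A| = \sum_(k < #|B|.+1) 'C(#|B|, k)%:R * f k.
Proof.
rewrite (partition_big (fun A : {set T} => (inord #|A| : 'I_#|B|.+1)) predT) //=.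
apply: eq_bigr => k _.
rewrite (eq_big (fun A => A \in [set A : {set T} | A \subset B & #|A| == k]) (fun _ => f k)).
- by rewrite sumr_const cards_draws mulr_natl.
- move=> A; rewrite in_set; case AB: (A \subset B) => //=.
  by rewrite -val_eqE /= inordK // ltnS subset_leq_card.
- by move=> A /andP[AB /eqP <-]; rewrite inordK // ltnS subset_leq_card.
Qed.

Lemma bin_mul_bin (n k m : nat) : (m <= k <= n)%N ->
  ('C(n, k) * 'C(k, m) = 'C(n, m) * 'C(n - m, k - m))%N.
Proof.
case/andP=> mk kn; have mn := leq_trans mk kn.
have pos : (0 < m`! * (k - m)`! * (n - k)`!)%N by rewrite !muln_gt0 !fact_gt0.
apply/eqP; rewrite -(eqn_pmul2r pos); apply/eqP.
have nmkm : (n - m - (k - m) = n - k)%N by lia.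
transitivity n`!; first by rewrite -(bin_fact kn) -(bin_fact mk); ring.
by rewrite -(bin_fact mn) -(bin_fact (leq_sub2r m kn)) nmkm; ring.
Qed.

Lemma sum_alt_bin (R : pzRingType) (r : nat) :
  \sum_(j < r.+1) (-1) ^+ j * 'C(r, j)%:R = (r == 0)%:R :> R.
Proof.
have := exprD1n (-1 : R) r; rewrite addNr expr0n => ->.
by apply: eq_bigr => i _; rewrite mulr_natr.
Qed.

Lemma big_ord_shift (R : nzSemiRingType) (F : nat -> R) (m n : nat) :
  (m <= n)%N -> (forall k, (k < m)%N -> F k = 0) ->
  \sum_(k < n.+1) F k = \sum_(j < (n - m).+1) F (m + j)%N.
Proof.
move=> mn F0; rewrite -!(big_mkord xpredT) (@big_cat_nat _ _ _ m) ?(leq_trans mn) //=.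
rewrite big_nat_cond big1 ?add0r => [|k /andP[/andP[_ km] _]]; last exact: F0.
by rewrite -{1}[m]add0n big_addn subSn // big_mkord; apply: eq_bigr => j _; rewrite addnC.
Qed.

Lemma bin_inversion (R : comNzRingType) (n m : nat) :
  \sum_(k < n.+1) 'C(n, k)%:R * ((-1) ^+ (k - m) * 'C(k, m)%:R) = (n == m)%:R :> R.
Proof.
have [nm | mn] := ltnP n m.
  rewrite big1 => [|k _]; first by rewrite ltn_eqF.
  by rewrite (@bin_small k m) ?mulr0 // (leq_ltn_trans _ nm) // -ltnS.
pose F k : R := 'C(n, k)%:R * ((-1) ^+ (k - m) * 'C(k, m)%:R).
rewrite (@big_ord_shift _ F m n mn) => [|k km]; last by rewrite /F (@bin_small k m) ?mulr0.
transitivity ('C(n, m)%:R * \sum_(j < (n - m).+1) (-1) ^+ j * 'C(n - m, j)%:R : R).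
  rewrite mulr_sumr; apply: eq_bigr => j _.
  rewrite /F addKn mulrCA -natrM bin_mul_bin ?addKn ?natrM 1?mulrCA //.
  by rewrite leq_addr /= -leq_subRL // -ltnS ltn_ord.
rewrite sum_alt_bin subn_eq0.
have [-> | nm] := eqVneq n m; first by rewrite binn leqnn mulr1.
by rewrite leqNgt ltn_neqAle eq_sym nm mn mulr0.
Qed.

Lemma eq_card_sum_subsets (R : comNzRingType) (T : finType) (B : {set T}) (m : nat) :
  (#|B| == m)%:R = \sum_(A : {set T} | A \subset B) (-1) ^+ (#|A| - m) * 'C(#|A|, m)%:R :> R.
Proof.
by rewrite -bin_inversion (sum_subsets_card B (fun k => (-1) ^+ (k - m) * 'C(k, m)%:R)).
Qed.

Lemma card_Nf_eq (R : comNzRingType) (p d m : nat) : prime p ->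
  #|[set c : {ffun 'I_d -> 'F_p} | Nf (monic_of c) == m]|%:R =
  \sum_(k < p.+1) 'C(p, k)%:R * ((-1) ^+ (k - m) * 'C(k, m)%:R *
     (if (k <= d)%N then p ^ (d - k) else 0)%N%:R) :> R.
Proof.
move=> p_pr.
pose w k : R := (-1) ^+ (k - m) * 'C(k, m)%:R.
pose g k : R := (if (k <= d)%N then p ^ (d - k) else 0)%N%:R.
rewrite -sum1_card natr_sum big_mkcond /=.
transitivity (\sum_(c : {ffun 'I_d -> 'F_p})
    \sum_(A : {set 'F_p}) (A \subset root_set (monic_of c))%:R * w #|A|).
  apply: eq_bigr => c _; rewrite inE Nf_root_set //.
  rewrite (_ : (if _ then 1 else 0) = (#|root_set (monic_of c)| == m)%:R :> R).
    rewrite eq_card_sum_subsets big_mkcond /=.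
    by apply: eq_bigr => A _; case: ifP; rewrite ?mul1r ?mul0r.
  by case: eqP.
rewrite exchange_big /=.
transitivity (\sum_(A : {set 'F_p}) w #|A| * g #|A|).
  apply: eq_bigr => A _; rewrite -mulr_suml mulrC; congr (_ * _).
  rewrite /g -card_monic_of_vanishing // -sum1_card natr_sum [RHS]big_mkcond /=.
  by apply: eq_bigr => c _; rewrite inE; case: (A \subset _).
rewrite (eq_bigl (fun A : {set 'F_p} => A \subset setT)) => [|A]; last by rewrite subsetT.
by rewrite (sum_subsets_card setT (fun k => w k * g k)) cardsT card_Fp.
Qed.

Lemma big_ord_trunc (R : nzSemiRingType) (F : nat -> R) (n N : nat) : (n <= N)%N ->
  (forall k, (n < k <= N)%N -> F k = 0) ->
  \sum_(k < N.+1) F k = \sum_(k < n.+1) F k.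
Proof.
move=> nN F0; rewrite -!(big_mkord xpredT) (@big_cat_nat _ _ _ n.+1) //=.
rewrite -[RHS]addr0; congr (_ + _); rewrite big_nat_cond big1 // => k /andP[kN _].
exact: F0.
Qed.

Definition ffact_ratio (R : fieldType) (p k : nat) : R := (p ^_ k)%:R / (p ^ k)%:R.

Lemma prob_N_sum (R : realType) (p d m : nat) : prime p -> (m <= minn p d)%N ->
  prob_N R p d m = (m`!%:R)^-1 *
    \sum_(j < (minn p d - m).+1) (-1) ^+ j / j`!%:R * ffact_ratio R p (m + j).
Proof.
move=> p_pr m_le; have p_gt0 := prime_gt0 p_pr.
pose F k : R := 'C(p, k)%:R * ((-1) ^+ (k - m) * 'C(k, m)%:R *
     (if (k <= d)%N then p ^ (d - k) else 0)%N%:R) / (p ^ d)%N%:R.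
rewrite /prob_N cardsT card_ffun card_Fp // card_ord card_Nf_eq // mulr_suml.
rewrite (@big_ord_trunc _ F (minn p d)) ?geq_minl //; last first.
  move=> k /andP[]; rewrite gtn_min => /orP[pk kp | dk _]; first by rewrite ltnNge kp in pk.
  by rewrite /F leqNgt dk !(mulr0, mul0r).
rewrite (@big_ord_shift _ F m) //; last first.
  by move=> k km; rewrite /F (@bin_small k m) // !(mulr0, mul0r).
rewrite mulr_sumr; apply: eq_bigr => j _; rewrite /F addKn.
have jd : (m + j <= d)%N.
  by have := ltn_ord j; rewrite ltnS leq_subRL // => /leq_trans; apply; exact: geq_minr.
rewrite jd /ffact_ratio -(bin_ffact p (m + j)) -(bin_fact (leq_addr j m)) addKn.
have -> : (p ^ d = p ^ (d - (m + j)) * p ^ (m + j))%N by rewrite -expnD subnK.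
rewrite !natrM.
have fact_neq0 n : (n`!%:R : R) != 0 by rewrite pnatr_eq0 -lt0n fact_gt0.
have exp_neq0 n : ((p ^ n)%N%:R : R) != 0 by rewrite pnatr_eq0 -lt0n expn_gt0 p_gt0.
by field; rewrite !fact_neq0 !exp_neq0.
Qed.

Lemma ffact_leq_expn (n k : nat) : (n ^_ k <= n ^ k)%N.
Proof. by elim: k => // k IHk; rewrite ffactnSr expnSr leq_mul // leq_subr. Qed.

Section FallingFactorialRatio.
Variables (R : realFieldType) (p : nat).
Hypothesis p_gt0 : (0 < p)%N.

Lemma ffact_ratio_ge0 k : 0 <= ffact_ratio R p k.
Proof. by rewrite divr_ge0 ?ler0n. Qed.

Lemma ffact_ratio_le1 k : ffact_ratio R p k <= 1.
Proof.
by rewrite ler_pdivrMr ?mul1r ?ltr0n ?expn_gt0 ?p_gt0 // ler_nat ffact_leq_expn.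
Qed.

Lemma ffact_ratioS k : (k <= p)%N ->
  ffact_ratio R p k.+1 = ffact_ratio R p k * (1 - k%:R / p%:R).
Proof.
move=> kp; rewrite /ffact_ratio ffactnSr expnSr !natrM natrB //.
have exp_neq0 : ((p ^ k)%N%:R : R) != 0 by rewrite pnatr_eq0 -lt0n expn_gt0 p_gt0.
have p_neq0 : (p%:R : R) != 0 by rewrite pnatr_eq0 -lt0n.
by field; rewrite p_neq0 exp_neq0.
Qed.

Lemma one_sub_ffact_ratio_le k : 1 - ffact_ratio R p k <= (k ^ 2)%:R / p%:R.
Proof.
have p_pos : (0 : R) < p%:R by rewrite ltr0n.
elim: k => [|k IHk]; first by rewrite /ffact_ratio ffactn0 expn0 divr1 subrr mul0r.
have [kp | pk] := ltnP k p; last first.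
  rewrite /ffact_ratio ffact_small ?ltnS // mul0r subr0 ler_pdivlMr // mul1r ler_nat.
  by rewrite (leq_trans pk) // (leq_trans (leqnSn k)) // expnS expn1 leq_pmulr.
rewrite ffact_ratioS ?(ltnW kp) //.
have r_ge0 := ffact_ratio_ge0 k; have r_le1 := ffact_ratio_le1 k.
have a_ge0 : 0 <= k%:R / p%:R :> R by rewrite divr_ge0 ?ler0n.
have ra_le : ffact_ratio R p k * (k%:R / p%:R) <= k%:R / p%:R by rewrite ler_piMl.
have -> : (k.+1 ^ 2)%:R / p%:R = (k ^ 2)%:R / p%:R + 2 * (k%:R / p%:R) + p%:R^-1 :> R.
  by rewrite !natrX -natr1; field; rewrite lt0r_neq0.
have : 0 <= p%:R^-1 :> R by rewrite invr_ge0 ltW.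
move: IHk; rewrite mulrBr mulr1; lra.
Qed.

End FallingFactorialRatio.

Lemma sum_inv_fact_le (R : realFieldType) (a n : nat) : (0 < a)%N ->
  \sum_(a.+1 <= j < a.+1 + n) (j`!%:R : R)^-1 <= a%:R^-1 - (a + n)%:R^-1.
Proof.
move=> a_gt0; elim: n => [|n IHn]; first by rewrite !addn0 big_geq // subrr.
rewrite addnS big_nat_recr /= ?leq_addr //.
suff step : ((a + n).+1`!%:R : R)^-1 <= (a + n)%:R^-1 - (a + n).+1%:R^-1.
  by rewrite (le_trans (lerD IHn step)) // addrA subrK addnS.
have -> : (a + n)%:R^-1 - (a + n).+1%:R^-1 = ((a + n).+1 * (a + n))%:R^-1 :> R.
  by rewrite natrM -natr1; field; rewrite -natrD natr1 !pnatr_eq0 -lt0n addn_gt0 a_gt0.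
rewrite lef_pV2 ?posrE ?ltr0n ?fact_gt0 ?muln_gt0 ?addn_gt0 ?a_gt0 //.
by rewrite ler_nat factS leq_mul2l fact_geq orbT.
Qed.

Lemma expRN1_sub_series_le (R : realType) (J : nat) : (0 < J)%N ->
  `|expR (-1) - series (exp_coeff (-1)) J.+1| <= J%:R^-1 :> R.
Proof.
move=> J_gt0; set S := series (exp_coeff (-1)) J.+1.
have partial_sums n : (J.+1 <= n)%N -> `|series (exp_coeff (-1 : R)) n - S| <= J%:R^-1.
  move=> Jn; rewrite /S /series /= (@big_cat_nat _ _ _ J.+1 0 n) //= addrAC subrr add0r.
  rewrite (le_trans (ler_norm_sum _ _ _)) // -(subnKC Jn).
  apply: le_trans (_ : J%:R^-1 - (J + (n - J.+1))%:R^-1 <= _); last first.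
    by rewrite lerBlDr lerDl invr_ge0 ler0n.
  apply: le_trans (sum_inv_fact_le R _ J_gt0); apply: ler_sum => k _.
  by rewrite /exp_coeff normrM normrX normrN normr1 expr1n mul1r ger0_norm // invr_ge0 ler0n.
have S_cvg := @is_cvg_series_exp_coeff R (-1).
rewrite ler_norml; apply/andP; split.
  rewrite lerBrDl /expR; apply: limr_ge => //.
  by exists J.+1 => // n /= Jn; move: (partial_sums n Jn); rewrite ler_norml => /andP[+ _]; lra.
rewrite lerBlDl /expR; apply: limr_le => //.
by exists J.+1 => // n /= Jn; move: (partial_sums n Jn); rewrite ler_norml => /andP[_]; lra.
Qed.


Section PoissonApproximation.
Variables (R : realType) (m p : nat).
Hypothesis p_gt0 : (0 < p)%N.

Let dev j : R := (-1) ^+ j / j`!%:R * (ffact_ratio R p (m + j) - 1).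

Let normr_dev j : `|dev j| = j`!%:R^-1 * (1 - ffact_ratio R p (m + j)).
Proof.
rewrite !normrM normrX normrN normr1 expr1n mul1r ger0_norm ?invr_ge0 ?ler0n //.
by rewrite distrC ger0_norm // subr_ge0 ffact_ratio_le1.
Qed.

Let dev_head_le N : `|\sum_(0 <= j < N.+1) dev j| <= (N.+1 * (m + N) ^ 2)%:R / p%:R.
Proof.
apply: le_trans (ler_norm_sum _ _ _) _.
apply: le_trans (_ : \sum_(0 <= j < N.+1) ((m + N) ^ 2)%:R / p%:R <= _); last first.
  by rewrite sumr_const_nat subn0 natrM -mulrA [X in _ <= X]mulr_natl.
rewrite big_nat_cond [X in _ <= X]big_nat_cond.
apply: ler_sum => j /andP[/andP[_ jN] _]; rewrite normr_dev.
apply: le_trans (_ : _ <= 1 - ffact_ratio R p (m + j)) _.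
  by rewrite ler_piMl ?subr_ge0 ?ffact_ratio_le1 // invf_le1 ?ltr0n ?fact_gt0 // ler1n fact_gt0.
apply: le_trans (one_sub_ffact_ratio_le R p_gt0 (m + j)) _.
by rewrite ler_pM2r ?invr_gt0 ?ltr0n // ler_nat leq_exp2r // leq_add2l -ltnS.
Qed.

Let dev_tail_le N J : (0 < N <= J)%N -> `|\sum_(N.+1 <= j < J.+1) dev j| <= N%:R^-1.
Proof.
case/andP=> N_gt0 NJ; apply: le_trans (ler_norm_sum _ _ _) _.
rewrite -(subnKC NJ) -addSn.
apply: le_trans (_ : _ <= \sum_(N.+1 <= j < N.+1 + (J - N)) j`!%:R^-1) _.
  apply: ler_sum => j _; rewrite normr_dev ler_piMr ?invr_ge0 ?ler0n //.
  by rewrite lerBlDr lerDl ffact_ratio_ge0.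
apply: le_trans (sum_inv_fact_le R _ N_gt0) _.
by rewrite lerBlDr lerDl invr_ge0 ler0n.
Qed.

Lemma ffact_ratio_sum_sub_expRN1_le N J : (0 < N <= J)%N ->
  `|\sum_(j < J.+1) (-1) ^+ j / j`!%:R * ffact_ratio R p (m + j) - expR (-1)|
    <= (N.+1 * (m + N) ^ 2)%:R / p%:R + 2 / N%:R.
Proof.
move=> NJ; have /andP[N_gt0 N_le] := NJ.
have series_le : `|series (exp_coeff (-1)) J.+1 - expR (-1)| <= N%:R^-1 :> R.
  rewrite distrC (le_trans (expRN1_sub_series_le R (leq_trans N_gt0 N_le))) //.
  by rewrite lef_pV2 ?posrE ?ltr0n ?ler_nat // (leq_trans N_gt0).
have -> : \sum_(j < J.+1) (-1) ^+ j / j`!%:R * ffact_ratio R p (m + j) - expR (-1) =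
    \sum_(0 <= j < N.+1) dev j + \sum_(N.+1 <= j < J.+1) dev j
    + (series (exp_coeff (-1)) J.+1 - expR (-1)).
  rewrite -(@big_cat_nat _ _ _ N.+1) //= /series /= addrA -big_split /= big_mkord.
  by congr (_ - _); apply: eq_bigr => j _; rewrite /dev /exp_coeff mulrBr mulr1 subrK.
rewrite mulr2n mulrDl mul1r [X in _ <= X]addrA.
have head := dev_head_le N; have tail := dev_tail_le NJ.
by rewrite (le_trans (ler_normD _ _)) // lerD // (le_trans (ler_normD _ _)) // lerD.
Qed.

End PoissonApproximation.

Lemma prob_N_sub_poisson_le (R : realType) (p d m N : nat) :
  prime p -> (0 < N)%N -> (N + m <= minn p d)%N ->
  `|prob_N R p d m - expR (-1) / m`!%:R|
    <= (N.+1 * (m + N) ^ 2)%:R / p%:R + 2 / N%:R.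
Proof.
move=> p_pr N_gt0 NmK; have mK := leq_trans (leq_addl N m) NmK.
have NJ : (0 < N <= minn p d - m)%N by rewrite N_gt0 leq_subRL // addnC.
rewrite prob_N_sum // (mulrC (expR _)) -mulrBr normrM ger0_norm ?invr_ge0 ?ler0n //.
apply: le_trans _ (ffact_ratio_sum_sub_expRN1_le R m (prime_gt0 p_pr) NJ).
by rewrite ler_piMl // invf_le1 ?ltr0n ?fact_gt0 // ler1n fact_gt0.
Qed.

Unset Implicit Arguments.
Set Strict Implicit.

Theorem theorem6 (R : realType) (m : nat) (eps : R) :
  0 < eps ->
  exists M : nat, forall p d : nat,
    prime p -> coprime d p -> (M <= p)%N -> (M <= d)%N ->
    `| prob_N R p d m - expR (-1) / (m`!)%:R | < eps.
Proof.
move=> eps_gt0.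
pose N := (Num.bound (4 / eps)).+1.
have N_large : 2 / N%:R < eps / 2.
  have : 4 / eps < N%:R.
    have := archi_boundP (divr_ge0 (ler0n R 4) (ltW eps_gt0)).
    by move/lt_le_trans; apply; rewrite ler_nat.
  by rewrite ltr_pdivrMr // ltr_pdivrMr ?ltr0n //; lra.
pose B : R := (N.+1 * (m + N) ^ 2)%:R.
pose M := maxn (N + m) (Num.bound (2 * B / eps)).
(* Coprimality of d and p matters for the geometry of C_f, not for the point count. *)
exists M => p d p_pr _ Mp Md.
have p_large : B / p%:R < eps / 2.
  have : 2 * B / eps < p%:R.
    have B_ge0 : 0 <= 2 * B by rewrite mulr_ge0 ?ler0n.
    have := archi_boundP (divr_ge0 B_ge0 (ltW eps_gt0)).
    by move/lt_le_trans; apply; rewrite ler_nat (leq_trans (leq_maxr _ _) Mp).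
  by rewrite ltr_pdivrMr // ltr_pdivrMr ?ltr0n ?prime_gt0 //; lra.
have NmK : (N + m <= minn p d)%N.
  by rewrite leq_min (leq_trans (leq_maxl _ _) Mp) (leq_trans (leq_maxl _ _) Md).
apply: le_lt_trans (prob_N_sub_poisson_le R p_pr (ltn0Sn _) NmK) _.
by apply: lt_le_trans (ltrD p_large N_large) _; rewrite -splitr.
Qed.
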